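(* Fix $\eta\in(0,1/3)$. There is a constant $c>0$ depending only on $\eta$ such that the following holds. Let $N,P\ge 2$ be integers and let $\boldsymbol a\in\mathbb Z^N$, $\boldsymbol\phi_0,\boldsymbol\phi_1\in\mathbb Z^P$ be such that, with $\overline{a_{n\cdot}}=a_{n\cdot}/(2P)$, $f_{p,0}=\phi_{p,0}/(2N)$, $f_{p,1}=\phi_{p,1}/(2N)$, one has $\overline{a_{n\cdot}}\in[\eta,1-\eta]$ for all $n\in[N]$ and $f_{p,0},f_{p,1}\ge\eta$, $f_{p,0}+f_{p,1}\le 1-\eta$ for all $p\in[P]$. If exactly one of the two statements ''$|\mathscr A_1(N,P;\boldsymbol a)|>|\mathscr A_2(N,P;\boldsymbol\phi_0,\boldsymbol\phi_1)|$'' and ''$H_1-H_2+\overline f>0$'' holds, then $$H_1-H_2+\overline f\in\left(-c\left(\frac{\log N}{N}+\frac{\log P}{P}\right),\ c\left(\frac{\log N}{N}+\frac{\log P}{P}\right)\right].$$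
   Context: Let $N,P$ be positive integers. An admixed array is a pair $[\mathbf A,\mathbf X]$ of matrices $\mathbf A=(A_{nj}),\mathbf X=(X_{nj})\in\{0,1\}^{N\times 2P}$; for $p\in[P]$, columns $p$ and $P+p$ form the $p$th locus. The row local ancestry tally of row $n$ is $A_{n\cdot}=\sum_{j=1}^{2P}A_{nj}$. The ancestry-specific allele dosages of locus $p$ are $\Phi_{p,0}=\sum_{n=1}^N[(1-A_{np})X_{np}+(1-A_{n(P+p)})X_{n(P+p)}]$ and $\Phi_{p,1}=\sum_{n=1}^N[A_{np}X_{np}+A_{n(P+p)}X_{n(P+p)}]$. $\mathscr A_1(N,P;\boldsymbol a)$ is the set of admixed arrays with $A_{n\cdot}=a_{n\cdot}$ for all $n$; $\mathscr A_2(N,P;\boldsymbol\phi_0,\boldsymbol\phi_1)$ is the set of admixed arrays with $\Phi_{p,0}=\phi_{p,0}$, $\Phi_{p,1}=\phi_{p,1}$ for all $p$. $\log$ is base 2. For a probability vector $(z_1,\ldots,z_I)$, $H(z_1,\ldots,z_I)=\sum_i z_i\log(1/z_i)$ (binary Shannon entropy). Define $H_1=\frac1N\sum_{n=1}^N H(\overline{a_{n\cdot}},1-\overline{a_{n\cdot}})$, $H_2=\frac1P\sum_{p=1}^P H(f_{p,0},f_{p,1},1-f_{p,0}-f_{p,1})$, and $\overline f=\frac1P\sum_{p=1}^P(f_{p,0}+f_{p,1})$. *)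

From HB Require Import structures.
From mathcomp Require Import all_boot all_order all_algebra.
From mathcomp Require Import all_classical all_reals all_analysis.
Set Implicit Arguments. Unset Strict Implicit. Unset Printing Implicit Defensive.
Import Order.TTheory GRing.Theory Num.Theory.
Local Open Scope ring_scope.

(* Admixed arrays: pairs (A, X) of N x 2P boolean (0/1) matrices.
   Columns are indexed by 'I_(P + P); locus p consists of columns
   lshift P p (value p) and rshift P p (value P + p). *)
Definition arr (N P : nat) := 'M[bool]_(N, P + P).

Definition row_tally N P (A : arr N P) (n : 'I_N) : nat :=
  (\sum_(j < P + P) (A n j : nat))%N.

Definition Phi0 N P (A X : arr N P) (p : 'I_P) : nat :=
  (\sum_(n < N) (((~~ A n (lshift P p)) && X n (lshift P p) : nat)
               + ((~~ A n (rshift P p)) && X n (rshift P p) : nat)))%N.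
Definition Phi1 N P (A X : arr N P) (p : 'I_P) : nat :=
  (\sum_(n < N) ((A n (lshift P p) && X n (lshift P p) : nat)
               + (A n (rshift P p) && X n (rshift P p) : nat)))%N.

Definition scrA1 N P (a : 'I_N -> int) : {set arr N P * arr N P} :=
  [set AX : arr N P * arr N P | [forall n, (row_tally AX.1 n)%:Z == a n]].

Definition scrA2 N P (phi0 phi1 : 'I_P -> int) : {set arr N P * arr N P} :=
  [set AX : arr N P * arr N P |
     [forall p, ((Phi0 AX.1 AX.2 p)%:Z == phi0 p)
                && ((Phi1 AX.1 AX.2 p)%:Z == phi1 p)]].

Definition log2 {R : realType} (x : R) : R := ln x / ln 2.

Definition hterm {R : realType} (z : R) : R :=
  if z == 0 then 0 else z * log2 (z^-1).

Definition entropy {R : realType} (zs : seq R) : R := \sum_(z <- zs) hterm z.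

Definition abar {R : realType} N P (a : 'I_N -> int) (n : 'I_N) : R :=
  (a n)%:~R / (2 * P%:R).
Definition fq {R : realType} N P (phi : 'I_P -> int) (p : 'I_P) : R :=
  (phi p)%:~R / (2 * N%:R).

Definition H1 {R : realType} N P (a : 'I_N -> int) : R :=
  N%:R^-1 * \sum_(n < N) entropy [:: abar P a n; 1 - abar P a n].
Definition H2 {R : realType} N P (phi0 phi1 : 'I_P -> int) : R :=
  P%:R^-1 * \sum_(p < P)
     entropy [:: fq N phi0 p; fq N phi1 p; 1 - fq N phi0 p - fq N phi1 p].
Definition fbar {R : realType} N P (phi0 phi1 : 'I_P -> int) : R :=
  P%:R^-1 * \sum_(p < P) (fq N phi0 p + fq N phi1 p).

(** Both sets factor into independent blocks. In [A_1] the rows are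
    independent: row [n] of [A] has [a_n] ones and [X] is free, so
    [|A_1| = prod_n C(2P, a_n) 2^(2P)]. In [A_2] the loci are independent:
    among the [2N] cells of locus [p], [phi_{p,0}] carry [(A, X) = (0, 1)],
    [phi_{p,1}] carry [(1, 1)] and the rest have [X = 0] and [A] free, so
    [|A_2| = prod_p C(2N, s_p) C(s_p, phi_{p,1}) 2^(2N - s_p)] with
    [s_p = phi_{p,0} + phi_{p,1}]. The crude Stirling bounds
    [n ln n - n <= ln n! <= n ln n - n + ln n + 1] give the logarithm of a
    multinomial coefficient [m! / prod k_i!] as [m ln 2] times the entropy of
    the ratios [k_i / m], up to [O(ln m)] per part. With [T = 2 N P ln 2] this
    yields [ln |A_1| = T (H_1 + 1) + O(N ln P)] and
    [ln |A_2| = T (H_2 - fbar + 1) + O(P ln N)], so [T (H_1 - H_2 + fbar)] is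
    within [O(N ln P + P ln N)] of [ln |A_1| - ln |A_2|]; if exactly one of the
    two is positive, both are smaller than this error in absolute value. *)

From HB Require Import structures.
From mathcomp Require Import all_boot all_order all_algebra zify.

Set Implicit Arguments. Unset Strict Implicit. Unset Printing Implicit Defensive.
Import Order.TTheory GRing.Theory Num.Theory.

(** * Counting admixed arrays *)

Lemma card_preim_can2 (T U : finType) (f : T -> U) (g : U -> T) (Q : pred U) :
  cancel f g -> cancel g f -> #|[set x | Q (f x)]| = #|[set y | Q y]|.
Proof.
move=> fK gK; rewrite -(card_imset _ (can_inj gK)) (can2_imset_pre _ gK fK).
by apply: eq_card => x; rewrite !inE.
Qed.

Lemma card_ffun_forall (I V : finType) (Q : I -> pred V) :
  #|[set f : {ffun I -> V} | [forall i, Q i (f i)]]| = \prod_i #|[set v | Q i v]|.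
Proof.
rewrite (@eq_card _ _ (family Q)) => [|f]; last by rewrite inE.
rewrite card_family foldrE big_map big_enum /=.
by apply: eq_bigr => i _; rewrite cardsE.
Qed.

Lemma sum_nat_of_bool (I : finType) (b : pred I) :
  \sum_i (b i : nat) = #|[set i | b i]|.
Proof. by rewrite -sum1dep_card [RHS]big_mkcond; apply: eq_bigr => i _; case: (b i). Qed.

Lemma card_draws_pair (J : finType) k :
  #|[set v : {set J} * {set J} | #|v.1| == k]| = 'C(#|J|, k) * 2 ^ #|J|.
Proof.
have -> : [set v : {set J} * {set J} | #|v.1| == k] =
          setX [set T : {set J} | #|T| == k] [set: {set J}].
  by apply/setP => -[T U]; rewrite !inE andbT.
by rewrite cardsX card_draws -powersetT card_powerset cardsT.
Qed.

Lemma card_setI_draws (J : finType) (S : {set J}) k :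
  #|[set T : {set J} | #|S :&: T| == k]| = 'C(#|S|, k) * 2 ^ #|~: S|.
Proof.
(* [split_at] maps the sets in question bijectively onto the k-subsets of [S]
   times the subsets of [~: S]. *)
pose split_at (T : {set J}) := (T :&: S, T :\: S).
have split_inj : injective split_at.
  by move=> T1 T2 [e1 e2]; rewrite -(setID T1 S) -(setID T2 S) e1 e2.
rewrite -(card_imset _ split_inj) -cards_draws -card_powerset -cardsX.
apply: eq_card => -[U V]; rewrite !inE /=; apply/imsetP/andP => [[T]|].
  rewrite inE => cardT [-> ->].
  by rewrite subsetIr setIC cardT setDE subsetIr.
move=> -[/andP[sUS cardU] sVS].
have VS0 : V :&: S = set0 by apply/eqP; rewrite setI_eq0 disjoints_subset.
have US0 : U :\: S = set0 by apply/eqP; rewrite setD_eq0.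
have VSV : V :\: S = V by apply/setDidPl; rewrite disjoints_subset.
have UVS : (U :|: V) :&: S = U by rewrite setIUl (setIidPl sUS) VS0 setU0.
exists (U :|: V); first by rewrite inE setIC UVS.
by rewrite /split_at UVS setDUl US0 VSV set0U.
Qed.

Lemma card_setD_setI_pair (J : finType) k0 k1 :
  #|[set v : {set J} * {set J} | (#|v.1 :\: v.2| == k0) && (#|v.1 :&: v.2| == k1)]|
  = 'C(#|J|, k0 + k1) * ('C(k0 + k1, k1) * 2 ^ (#|J| - (k0 + k1))).
Proof.
(* For a fixed first set [S] the constraint forces [#|S| = k0 + k1], after
   which only [#|S :&: T| == k1] matters. *)
have fiber S : #|[set T : {set J} | (#|S :\: T| == k0) && (#|S :&: T| == k1)]| =
    (#|S| == k0 + k1) * ('C(k0 + k1, k1) * 2 ^ (#|J| - (k0 + k1))).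
  have splitS T := cardsID T S.
  case: eqP => [cardS | cardS_neq].
    have -> : (#|J| - (k0 + k1) = #|~: S|)%N by rewrite [RHS]cardsCs setCK cardS.
    rewrite mul1n -cardS -card_setI_draws.
    by apply: eq_card => T; rewrite !inE; have := splitS T; case: eqP; lia.
  apply/eqP; rewrite cards_eq0; apply/eqP/setP => T; rewrite !inE.
  by apply/negP => /andP[/eqP ? /eqP ?]; have := splitS T; lia.
rewrite -sum_nat_of_bool -(pair_bigA _ (fun S T =>
  ((#|S :\: T| == k0) && (#|S :&: T| == k1) : nat))) /=.
under eq_bigr => S _ do rewrite sum_nat_of_bool fiber.
by rewrite -big_distrl /= sum_nat_of_bool card_draws.
Qed.

Section ArrayEncodings.
Variables N P : nat.

Local Notation row_data := {ffun 'I_N -> {set 'I_(P + P)} * {set 'I_(P + P)}}.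
Local Notation locus_data := {ffun 'I_P -> {set 'I_N * bool} * {set 'I_N * bool}}.

Definition row_sets (AX : arr N P * arr N P) : row_data :=
  [ffun n => ([set j | AX.1 n j], [set j | AX.2 n j])].

Definition arr_of_row_sets (f : row_data) : arr N P * arr N P :=
  ((\matrix_(n, j) (j \in (f n).1))%R, (\matrix_(n, j) (j \in (f n).2))%R).

Lemma row_setsK : cancel row_sets arr_of_row_sets.
Proof. by move=> [A X]; congr (_, _); apply/matrixP => n j; rewrite !mxE ffunE inE. Qed.

Lemma arr_of_row_setsK : cancel arr_of_row_sets row_sets.
Proof.
move=> f; apply/ffunP => n; rewrite ffunE; case E: (f n) => [U V].
by congr (_, _); apply/setP => j; rewrite inE mxE E.
Qed.

Definition col_of_locus (pb : 'I_P * bool) : 'I_(P + P) :=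
  unsplit (if pb.2 then inr pb.1 else inl pb.1).

Definition locus_of_col (j : 'I_(P + P)) : 'I_P * bool :=
  match split j with inl p => (p, false) | inr p => (p, true) end.

Lemma col_of_locusK : cancel col_of_locus locus_of_col.
Proof. by move=> [p []]; rewrite /locus_of_col /col_of_locus unsplitK. Qed.

Lemma locus_of_colK : cancel locus_of_col col_of_locus.
Proof. by move=> j; rewrite -[RHS]splitK /locus_of_col; case: (split j). Qed.

Definition locus_sets (AX : arr N P * arr N P) : locus_data :=
  [ffun p => ([set c | AX.2 c.1 (col_of_locus (p, c.2))],
              [set c | AX.1 c.1 (col_of_locus (p, c.2))])].

Definition arr_of_locus_sets (f : locus_data) : arr N P * arr N P :=
  let cell k n j := (n, (locus_of_col j).2) \in k (f (locus_of_col j).1) in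
  ((\matrix_(n, j) cell snd n j)%R, (\matrix_(n, j) cell fst n j)%R).

Lemma locus_setsK : cancel locus_sets arr_of_locus_sets.
Proof.
by move=> [A X]; congr (_, _); apply/matrixP => n j;
  rewrite !mxE ffunE inE -surjective_pairing locus_of_colK.
Qed.

Lemma arr_of_locus_setsK : cancel arr_of_locus_sets locus_sets.
Proof.
move=> f; apply/ffunP => p; rewrite ffunE; case E: (f p) => [U V].
by congr (_, _); apply/setP => -[n b]; rewrite inE mxE col_of_locusK E.
Qed.

Lemma sum_locus (F : 'I_N -> 'I_(P + P) -> nat) (p : 'I_P) :
  \sum_n (F n (lshift P p) + F n (rshift P p)) =
  \sum_(c : 'I_N * bool) F c.1 (col_of_locus (p, c.2)).
Proof.
rewrite -(pair_bigA _ (fun n b => F n (col_of_locus (p, b)))).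
by apply: eq_bigr => n _; rewrite big_bool addnC.
Qed.

Lemma Phi0E (A X : arr N P) p :
  Phi0 A X p = #|(locus_sets (A, X) p).1 :\: (locus_sets (A, X) p).2|.
Proof.
rewrite /Phi0 (sum_locus (fun n j => ~~ A n j && X n j)) sum_nat_of_bool.
by apply: eq_card => c; rewrite ffunE !inE andbC.
Qed.

Lemma Phi1E (A X : arr N P) p :
  Phi1 A X p = #|(locus_sets (A, X) p).1 :&: (locus_sets (A, X) p).2|.
Proof.
rewrite /Phi1 (sum_locus (fun n j => A n j && X n j)) sum_nat_of_bool.
by apply: eq_card => c; rewrite ffunE !inE andbC.
Qed.

Lemma card_scrA1 (a : 'I_N -> int) : (forall n, 0 <= a n)%R ->
  #|scrA1 P a| = \prod_(n < N) ('C(P + P, `|a n|) * 2 ^ (P + P)).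
Proof.
move=> a_ge0; pose Q n (v : {set 'I_(P + P)} * {set 'I_(P + P)}) := #|v.1| == `|a n|.
have -> : #|scrA1 P a| = #|[set AX | [forall n, Q n (row_sets AX n)]]|.
  apply: eq_card => AX; rewrite !inE; apply: eq_forallb => n.
  by rewrite /Q ffunE /row_tally sum_nat_of_bool -eqz_nat gez0_abs.
rewrite (card_preim_can2 (fun f : row_data => [forall n, Q n (f n)])
                         row_setsK arr_of_row_setsK).
rewrite (card_ffun_forall Q); apply: eq_bigr => n _.
by rewrite card_draws_pair card_ord.
Qed.

Lemma card_scrA2 (phi0 phi1 : 'I_P -> int) :
  (forall p, 0 <= phi0 p)%R -> (forall p, 0 <= phi1 p)%R ->
  #|scrA2 N phi0 phi1| = \prod_(p < P)
    ('C(N + N, `|phi0 p| + `|phi1 p|) *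
     ('C(`|phi0 p| + `|phi1 p|, `|phi1 p|) * 2 ^ (N + N - (`|phi0 p| + `|phi1 p|)))).
Proof.
move=> phi0_ge0 phi1_ge0.
pose Q p (v : {set 'I_N * bool} * {set 'I_N * bool}) :=
  (#|v.1 :\: v.2| == `|phi0 p|) && (#|v.1 :&: v.2| == `|phi1 p|).
have -> : #|scrA2 N phi0 phi1| = #|[set AX | [forall p, Q p (locus_sets AX p)]]|.
  apply: eq_card => -[A X]; rewrite !inE; apply: eq_forallb => p.
  by rewrite /Q -Phi0E -Phi1E -!eqz_nat !gez0_abs.
rewrite (card_preim_can2 (fun f : locus_data => [forall p, Q p (f p)])
                         locus_setsK arr_of_locus_setsK).
rewrite (card_ffun_forall Q); apply: eq_bigr => p _.
have -> : (N + N)%N = #|{: 'I_N * bool}|.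
  by rewrite card_prod card_ord card_bool addnn muln2.
by rewrite -card_setD_setI_pair.
Qed.

End ArrayEncodings.

From mathcomp Require Import all_classical all_reals all_analysis ring lra.

Local Open Scope ring_scope.

(** * Entropy estimates *)

Section LogEstimates.
Variable R : realType.

Lemma lnB_le (x y : R) : 0 < x -> 0 < y -> ln x - ln y <= x / y - 1.
Proof.
move=> x_gt0 y_gt0; rewrite -lnV ?posrE // -lnM ?posrE ?invr_gt0 //.
by have := @le_ln1Dx R (x / y - 1); rewrite subrKC; apply; rewrite ltrBDl subrr divr_gt0.
Qed.

Lemma ln2_ge_half : 2^-1 <= ln (2 : R).
Proof. by have := @lnB_le 1 2 ltr01 (ltr0Sn _ 1); rewrite ln1 mul1r; lra. Qed.

Lemma ln_nat_ge0 (n : nat) : 0 <= ln (n%:R : R).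
Proof. by case: n => [|n]; [rewrite ln0 | rewrite ln_ge0 // ler1n]. Qed.

Lemma ln_nat_le (k m : nat) : (k <= m)%N -> ln (k%:R : R) <= ln m%:R.
Proof.
case: k => [|k] km; first by rewrite ln0 ?ln_nat_ge0.
by rewrite ler_ln ?posrE ?ltr0n ?ler_nat // (leq_trans _ km).
Qed.

Lemma ln_prod (I : finType) (F : I -> R) : (forall i, 0 < F i) ->
  ln (\prod_i F i) = \sum_i ln (F i).
Proof.
move=> F_gt0; suff [] : 0 < \prod_i F i /\ ln (\prod_i F i) = \sum_i ln (F i) by [].
apply: (big_ind2 (fun x y => 0 < x /\ ln x = y)).
- by rewrite ln1.
- by move=> x1 y1 x2 y2 [x1_gt0 <-] [x2_gt0 <-]; rewrite mulr_gt0 // lnM.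
- by move=> i _; rewrite F_gt0.
Qed.

(* Also valid for [n = 0], where [ln 0 = 0]. *)
Lemma ln_fact_bounds (n : nat) :
  (n%:R : R) * ln n%:R - n%:R <= ln (n`!%:R : R) <= n%:R * ln n%:R - n%:R + ln n%:R + 1.
Proof.
case: n => [|n]; first by rewrite fact0 ln1 mul0r ln0 //; lra.
elim: n => [|n IH]; first by rewrite factS fact0 muln1 ln1 mul1r; lra.
set x : R := n.+1%:R; set y : R := n.+2%:R.
have x_ge1 : 1 <= x by rewrite ler1n.
have yE : y = x + 1 by rewrite /x /y -natr1.
have ln_step_le : x * (ln y - ln x) <= 1.
  have -> : 1 = x * (y / x - 1) by rewrite yE; field; lra.
  by rewrite ler_wpM2l ?lnB_le //; lra.
have ln_step_ge : 1 <= y * (ln y - ln x).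
  have : y * (ln x - ln y) <= y * (x / y - 1) by rewrite ler_wpM2l ?lnB_le //; lra.
  have -> : y * (x / y - 1) = -1 by rewrite yE; field; lra.
  lra.
rewrite factS natrM lnM ?posrE ?ltr0n ?fact_gt0 // -/y.
move: IH; rewrite -/x => /andP[IHlo IHup].
by apply/andP; split; nra.
Qed.

Lemma ln_binomial (m k : nat) : (k <= m)%N ->
  ln ('C(m, k)%:R : R) = ln m`!%:R - ln k`!%:R - ln (m - k)`!%:R.
Proof.
move=> km; rewrite -(bin_fact km) !natrM.
by rewrite !lnM ?posrE ?mulr_gt0 ?ltr0n ?fact_gt0 ?bin_gt0 //; ring.
Qed.

Lemma hterm_ratio (k m : nat) : (k <= m)%N ->
  m%:R * ln 2 * hterm (k%:R / m%:R : R) = k%:R * (ln m%:R - ln k%:R).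
Proof.
case: k => [|k] km; first by rewrite /hterm mul0r eqxx mulr0 mul0r.
have m_gt0 : 0 < m%:R :> R by rewrite ltr0n (leq_trans _ km).
have k_gt0 : 0 < k.+1%:R :> R by rewrite ltr0n.
have := ln2_ge_half; rewrite /hterm /log2 mulf_eq0 invr_eq0 !gt_eqF //= invf_div.
by rewrite lnM ?lnV ?posrE ?invr_gt0 // => ln2_ge; field; lra.
Qed.

Lemma mem_leq_sumn (ks : seq nat) k : k \in ks -> (k <= sumn ks)%N.
Proof. by elim: ks => //= k' ks IH; rewrite in_cons => /orP[/eqP-> | /IH]; lia. Qed.

Lemma entropy_counts (ks : seq nat) :
  (sumn ks)%:R * ln 2 * entropy [seq k%:R / (sumn ks)%:R | k <- ks] =
  (sumn ks)%:R * ln (sumn ks)%:R - \sum_(k <- ks) k%:R * ln k%:R :> R.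
Proof.
rewrite /entropy big_map mulr_sumr.
under eq_big_seq => k /mem_leq_sumn km do rewrite hterm_ratio // mulrBr.
by rewrite sumrB -mulr_suml -natr_sum -sumnE.
Qed.

Lemma ln_multinomial_entropy (ks : seq nat) : ks != [::] ->
  `|ln (sumn ks)`!%:R - \sum_(k <- ks) ln k`!%:R
     - (sumn ks)%:R * ln 2 * entropy [seq k%:R / (sumn ks)%:R | k <- ks] : R|
  <= (size ks)%:R * (ln (sumn ks)%:R + 1).
Proof.
move=> ks_neq0; rewrite entropy_counts; set m := sumn ks.
(* The Stirling remainders [r]; the main terms cancel since the [k] sum to [m]. *)
pose r (n : nat) : R := ln n`!%:R - (n%:R * ln n%:R - n%:R).
have r_bounds n : 0 <= r n <= ln n%:R + 1.
  by have /andP[lo up] := ln_fact_bounds n; rewrite /r; apply/andP; split; lra.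
have -> : ln m`!%:R - \sum_(k <- ks) ln k`!%:R
          - (m%:R * ln m%:R - \sum_(k <- ks) k%:R * ln k%:R) = r m - \sum_(k <- ks) r k.
  by rewrite /r !sumrB -natr_sum -sumnE -/m; ring.
have sum_r_ge0 : 0 <= \sum_(k <- ks) r k by apply: sumr_ge0 => k _; case/andP: (r_bounds k).
have sum_r_le : \sum_(k <- ks) r k <= (size ks)%:R * (ln m%:R + 1).
  apply: (@le_trans _ _ (\sum_(k <- ks) (ln m%:R + 1))).
    rewrite big_seq [leRHS]big_seq; apply: ler_sum => k /mem_leq_sumn km.
    case/andP: (r_bounds k) => _ /le_trans; apply.
    by rewrite lerD2r ln_nat_le.
  by rewrite big_const_seq count_predT iter_addr_0 mulr_natl.
have size_ge1 : 1 <= (size ks)%:R :> R by rewrite ler1n lt0n size_eq0.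
have /andP[rm_ge0 rm_le] := r_bounds m; have := ln_nat_ge0 m => ln_m_ge0.
rewrite ler_norml; apply/andP; split; nra.
Qed.

Lemma ln_row_count (m k : nat) : (0 < m)%N -> (k <= m)%N ->
  `|ln ('C(m, k) * 2 ^ m)%:R
    - m%:R * ln 2 * (entropy [:: k%:R / m%:R; 1 - k%:R / m%:R] + 1) : R|
  <= 2 * (ln m%:R + 1).
Proof.
move=> m_gt0 km; have m_neq0 : m%:R != 0 :> R by rewrite pnatr_eq0 -lt0n.
have last_ratio : (m - k)%:R / m%:R = 1 - k%:R / m%:R :> R by rewrite natrB //; field.
have := @ln_multinomial_entropy [:: k; (m - k)%N] isT.
rewrite /= addn0 subnKC // big_cons big_seq1 last_ratio => bound.
apply: le_trans bound; rewrite le_eqVlt; apply/predU1P; left; congr `|_|.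
rewrite natrM lnM ?posrE ?ltr0n ?bin_gt0 ?expn_gt0 // natrX lnXn // ln_binomial //.
by rewrite -[ln 2 *+ _]mulr_natl; set H := entropy _; field.
Qed.

Lemma ln_locus_count (m k0 k1 : nat) : (0 < m)%N -> (k0 + k1 <= m)%N ->
  `|ln ('C(m, k0 + k1) * ('C(k0 + k1, k1) * 2 ^ (m - (k0 + k1))))%:R
    - m%:R * ln 2 * (entropy [:: k0%:R / m%:R; k1%:R / m%:R;
                                 1 - k0%:R / m%:R - k1%:R / m%:R]
                     + 1 - k0%:R / m%:R - k1%:R / m%:R) : R|
  <= 3 * (ln m%:R + 1).
Proof.
move=> m_gt0 km; have m_neq0 : m%:R != 0 :> R by rewrite pnatr_eq0 -lt0n.
have last_ratio : (m - (k0 + k1))%:R / m%:R = 1 - k0%:R / m%:R - k1%:R / m%:R :> R.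
  by rewrite natrB // natrD; field.
have := @ln_multinomial_entropy [:: k0; k1; (m - (k0 + k1))%N] isT.
rewrite /= addn0 addnA subnKC // !big_cons big_nil addr0 last_ratio => bound.
apply: le_trans bound; rewrite le_eqVlt; apply/predU1P; left; congr `|_|.
rewrite !natrM !lnM ?posrE ?mulr_gt0 ?ltr0n ?bin_gt0 ?expn_gt0 ?leq_addl //.
rewrite natrX lnXn // !ln_binomial ?leq_addl // addnK.
rewrite -[ln 2 *+ _]mulr_natl natrB // natrD.
by set H := entropy _; field.
Qed.

Lemma natr_double (n : nat) : (n + n)%:R = 2 * n%:R :> R.
Proof. by rewrite natrD -mulr2n mulr_natl. Qed.

Lemma int_ratio_bounds (z : int) (m : nat) : (0 < m)%N ->
  0 <= (z%:~R / m%:R : R) <= 1 -> 0 <= z /\ (`|z| <= m)%N.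
Proof.
move=> m_gt0; have m_gt0' : 0 < m%:R :> R by rewrite ltr0n.
rewrite pmulr_lge0 ?invr_gt0 // ler_pdivrMr // mul1r => /andP[z_ge0 z_le].
have : z <= m%:Z by rewrite -(ler_int R).
by rewrite ler0z in z_ge0; split; [|lia].
Qed.

Lemma abar_bounds N P (a : 'I_N -> int) n : (0 < P)%N ->
  0 <= (abar P a n : R) <= 1 -> 0 <= a n /\ (`|a n| <= P + P)%N.
Proof.
by move=> P_gt0; rewrite /abar -natr_double; apply: int_ratio_bounds; lia.
Qed.

Lemma fq_bounds N P (phi0 phi1 : 'I_P -> int) p : (0 < N)%N ->
  [/\ 0 <= (fq N phi0 p : R), 0 <= (fq N phi1 p : R)
    & fq N phi0 p + fq N phi1 p <= 1 :> R] ->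
  [/\ 0 <= phi0 p, 0 <= phi1 p & (`|phi0 p| + `|phi1 p| <= N + N)%N].
Proof.
move=> N_gt0; have NN_gt0 : (0 < N + N)%N by lia.
rewrite /fq -natr_double => -[f0_ge0 f1_ge0 f_le].
have /(int_ratio_bounds NN_gt0)[phi0_ge0 _] : 0 <= ((phi0 p)%:~R / (N + N)%:R : R) <= 1.
  by rewrite f0_ge0; lra.
have /(int_ratio_bounds NN_gt0)[phi1_ge0 _] : 0 <= ((phi1 p)%:~R / (N + N)%:R : R) <= 1.
  by rewrite f1_ge0; lra.
have /(int_ratio_bounds NN_gt0)[_ sum_le] :
    0 <= ((phi0 p + phi1 p)%:~R / (N + N)%:R : R) <= 1.
  by rewrite intrD mulrDl f_le addr_ge0.
by split=> //; lia.
Qed.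

Lemma card_scrA1_gt0 N P (a : 'I_N -> int) : (0 < P)%N ->
  (forall n, 0 <= (abar P a n : R) <= 1) -> (0 < #|scrA1 P a|)%N.
Proof.
move=> P_gt0 abar01; have a_nat n := abar_bounds P_gt0 (abar01 n).
rewrite card_scrA1; last by move=> n; case: (a_nat n).
by rewrite prodn_gt0 // => n; rewrite muln_gt0 bin_gt0 expn_gt0; case: (a_nat n) => _ ->.
Qed.

Lemma card_scrA2_gt0 N P (phi0 phi1 : 'I_P -> int) : (0 < N)%N ->
  (forall p, [/\ 0 <= (fq N phi0 p : R), 0 <= (fq N phi1 p : R)
               & fq N phi0 p + fq N phi1 p <= 1 :> R]) ->
  (0 < #|scrA2 N phi0 phi1|)%N.
Proof.
move=> N_gt0 fq01; have phi_nat p := fq_bounds N_gt0 (fq01 p).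
have [phi0_ge0 phi1_ge0] : (forall p, 0 <= phi0 p) /\ (forall p, 0 <= phi1 p).
  by split=> p; case: (phi_nat p).
rewrite card_scrA2 // prodn_gt0 // => p; rewrite !muln_gt0 !bin_gt0 expn_gt0 leq_addl.
by case: (phi_nat p) => _ _ ->.
Qed.

Lemma ln_card_scrA1 N P (a : 'I_N -> int) : (0 < N)%N -> (0 < P)%N ->
  (forall n, 0 <= (abar P a n : R) <= 1) ->
  `|ln #|scrA1 P a|%:R - 2 * N%:R * P%:R * ln 2 * (H1 P a + 1) : R|
  <= N%:R * (2 * (ln (P + P)%:R + 1)).
Proof.
move=> N_gt0 P_gt0 abar01; have a_nat n := abar_bounds P_gt0 (abar01 n).
pose E n : R := entropy [:: abar P a n; 1 - abar P a n] + 1.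
have row_bound n :
    `|ln ('C(P + P, `|a n|) * 2 ^ (P + P))%:R - (P + P)%:R * ln 2 * E n| <=
    2 * (ln (P + P)%:R + 1).
  have [a_ge0 a_le] := a_nat n; rewrite /E.
  have -> : abar P a n = `|a n|%:R / (P + P)%:R :> R.
    by rewrite /abar natr_double natr_absz ger0_norm.
  by apply: ln_row_count; rewrite // addn_gt0 P_gt0.
have -> : 2 * N%:R * P%:R * ln 2 * (H1 P a + 1) = \sum_n (P + P)%:R * ln 2 * E n.
  rewrite /E -mulr_sumr big_split /= sumr_const card_ord /H1 natrD.
  by field; rewrite pnatr_eq0 -lt0n.
rewrite card_scrA1; last by move=> n; case: (a_nat n).
rewrite natr_prod ln_prod; last first.
  by move=> n; rewrite ltr0n muln_gt0 bin_gt0 expn_gt0; case: (a_nat n) => _ ->.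
rewrite -sumrB; apply: le_trans (ler_norm_sum _ _ _) _.
apply: le_trans (ler_sum _ (fun n _ => row_bound n)) _.
by rewrite sumr_const card_ord -[_ *+ N]mulr_natl.
Qed.

Lemma ln_card_scrA2 N P (phi0 phi1 : 'I_P -> int) : (0 < N)%N -> (0 < P)%N ->
  (forall p, [/\ 0 <= (fq N phi0 p : R), 0 <= (fq N phi1 p : R)
               & fq N phi0 p + fq N phi1 p <= 1 :> R]) ->
  `|ln #|scrA2 N phi0 phi1|%:R
    - 2 * N%:R * P%:R * ln 2 * (H2 N phi0 phi1 - fbar N phi0 phi1 + 1) : R|
  <= P%:R * (3 * (ln (N + N)%:R + 1)).
Proof.
move=> N_gt0 P_gt0 fq01; have phi_nat p := fq_bounds N_gt0 (fq01 p).
have [phi0_ge0 phi1_ge0] : (forall p, 0 <= phi0 p) /\ (forall p, 0 <= phi1 p).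
  by split=> p; case: (phi_nat p).
pose E p : R := entropy [:: fq N phi0 p; fq N phi1 p; 1 - fq N phi0 p - fq N phi1 p]
                + 1 - fq N phi0 p - fq N phi1 p.
pose s p := (`|phi0 p| + `|phi1 p|)%N.
have locus_bound p :
    `|ln ('C(N + N, s p) * ('C(s p, `|phi1 p|) * 2 ^ (N + N - s p)))%:R
      - (N + N)%:R * ln 2 * E p| <= 3 * (ln (N + N)%:R + 1).
  have fqE (phi : 'I_P -> int) : 0 <= phi p -> fq N phi p = `|phi p|%:R / (N + N)%:R :> R.
    by move=> phi_ge0; rewrite /fq natr_double natr_absz ger0_norm.
  case: (phi_nat p) => _ _ phi_le.
  by rewrite /E !fqE //; apply: ln_locus_count => //; rewrite addn_gt0 N_gt0.
have -> : 2 * N%:R * P%:R * ln 2 * (H2 N phi0 phi1 - fbar N phi0 phi1 + 1) =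
          \sum_p (N + N)%:R * ln 2 * E p.
  rewrite /E -mulr_sumr !sumrB big_split /= sumr_const card_ord /H2 /fbar big_split /=.
  rewrite natrD.
  by field; rewrite pnatr_eq0 -lt0n.
rewrite card_scrA2 // natr_prod ln_prod; last first.
  move=> p; rewrite ltr0n !muln_gt0 !bin_gt0 expn_gt0 leq_addl.
  by case: (phi_nat p) => _ _ ->.
rewrite -sumrB; apply: le_trans (ler_norm_sum _ _ _) _.
apply: le_trans (ler_sum _ (fun p _ => locus_bound p)) _.
by rewrite sumr_const card_ord -[_ *+ P]mulr_natl.
Qed.

Lemma ln_double_add1_le (n : nat) :
  (2 <= n)%N -> ln (n + n)%:R + 1 <= 4 * ln (n%:R : R).
Proof.
move=> n_ge2; have n_gt0 : 0 < n%:R :> R by rewrite ltr0n; lia.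
rewrite natr_double lnM ?posrE //.
have : ln 2%:R <= ln (n%:R : R) by apply: ln_nat_le.
by have := ln2_ge_half; lra.
Qed.

Lemma log_error_bound (N P : nat) : (2 <= N)%N -> (2 <= P)%N ->
  N%:R * (2 * (ln (P + P)%:R + 1)) + P%:R * (3 * (ln (N + N)%:R + 1))
  <= 2 * N%:R * P%:R * ln 2 * (6 * (log2 N%:R / N%:R + log2 P%:R / P%:R)) :> R.
Proof.
move=> N_ge2 P_ge2.
have N_gt0 : 0 < N%:R :> R by rewrite ltr0n; lia.
have P_gt0 : 0 < P%:R :> R by rewrite ltr0n; lia.
have ln2_ge := ln2_ge_half.
have -> : 2 * N%:R * P%:R * ln 2 * (6 * (log2 N%:R / N%:R + log2 P%:R / P%:R)) =
          12 * (N%:R * ln P%:R + P%:R * ln N%:R) :> R.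
  by rewrite /log2; field; rewrite !gt_eqF //; lra.
have := ln_double_add1_le P_ge2; have := ln_double_add1_le N_ge2.
have := ln_nat_ge0 N; have := ln_nat_ge0 P.
nra.
Qed.

Lemma xor_pos_close (x y e t : R) : 0 < t -> `|t * y - x| <= t * e ->
  (0 < x) (+) (0 < y) -> - e < y <= e.
Proof.
move=> t_gt0 bound.
have e_ge0 : 0 <= e by rewrite -(pmulr_rge0 _ t_gt0) (le_trans _ bound).
move: bound; rewrite ler_norml => /andP[lo hi].
case: (ltP 0 x) => x_pos; case: (ltP 0 y) => y_pos //= _.
  have : 0 < t * (y + e) by rewrite mulrDr; lra.
  by rewrite pmulr_rgt0 // => ?; apply/andP; split; lra.
have : t * y <= t * e by lra.
by rewrite ler_pM2l // => ?; apply/andP; split; lra.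
Qed.
End LogEstimates.

Theorem mainTheorem4 (R : realType) (eta : R) :
  0 < eta -> eta < 3^-1 ->
  exists c : R, 0 < c /\
  forall (N P : nat) (a : 'I_N -> int) (phi0 phi1 : 'I_P -> int),
    (2 <= N)%N -> (2 <= P)%N ->
    (forall n : 'I_N, eta <= abar P a n <= 1 - eta) ->
    (forall p : 'I_P, eta <= fq N phi0 p /\ eta <= fq N phi1 p /\
                      fq N phi0 p + fq N phi1 p <= 1 - eta) ->
    let D : R := H1 P a - H2 N phi0 phi1 + fbar N phi0 phi1 in
    let B : R := c * (log2 (N%:R) / N%:R + log2 (P%:R) / P%:R) in
    ((#|scrA1 P a| > #|scrA2 N phi0 phi1|)%N (+) (D > 0)) ->
    - B < D <= B.
Proof.
move=> eta_gt0 _; exists 6; split=> // N P a phi0 phi1 N_ge2 P_ge2 abar_eta fq_eta D B.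
have N_gt0 : (0 < N)%N by lia.
have P_gt0 : (0 < P)%N by lia.
have abar01 n : 0 <= (abar P a n : R) <= 1.
  by case/andP: (abar_eta n) => lo hi; apply/andP; split; lra.
have fq01 p : [/\ 0 <= (fq N phi0 p : R), 0 <= (fq N phi1 p : R)
               & fq N phi0 p + fq N phi1 p <= 1 :> R].
  by case: (fq_eta p) => ? [? ?]; split; lra.
have A1_gt0 := card_scrA1_gt0 P_gt0 abar01.
have A2_gt0 := card_scrA2_gt0 N_gt0 fq01.
rewrite -(ltr_nat R) -ltr_ln ?posrE ?ltr0n // -subr_gt0.
set L1 := ln #|scrA1 P a|%:R; set L2 := ln #|scrA2 N phi0 phi1|%:R.
set T : R := 2 * N%:R * P%:R * ln 2.
have T_gt0 : 0 < T by rewrite !mulr_gt0 ?ltr0n //; have := @ln2_ge_half R; lra.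
apply: (xor_pos_close T_gt0); apply: le_trans (log_error_bound R N_ge2 P_ge2).
have -> : T * D - (L1 - L2) =
    (L2 - T * (H2 N phi0 phi1 - fbar N phi0 phi1 + 1)) - (L1 - T * (H1 P a + 1)).
  by rewrite /D; ring.
apply: le_trans (ler_normB _ _) _; rewrite addrC.
exact: lerD (ln_card_scrA1 N_gt0 P_gt0 abar01) (ln_card_scrA2 N_gt0 P_gt0 fq01).
Qed.
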